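(* Let ${\mathbf B}_1$ and ${\mathbf B}_2$ be two real symmetric $3\times3$ matrices. If ${\mathbf B}_1+t{\mathbf B}_2$ has a multiple eigenvalue for every real number $t$, then ${\mathbf B}_1$ and ${\mathbf B}_2$ can be diagonalized by the same orthogonal matrix. *)

From mathcomp Require Import all_boot all_order all_algebra.
From mathcomp Require Import reals.
Set Implicit Arguments. Unset Strict Implicit. Unset Printing Implicit Defensive.
Import Order.TTheory GRing.Theory Num.Theory.
Local Open Scope ring_scope.

Definition symmetric_mx (R : realType) n (A : 'M[R]_n) : Prop := A^T = A.

Definition orthogonal_mx (R : realType) n (Q : 'M[R]_n) : Prop := Q *m Q^T = 1%:M.

Definition has_multiple_eigenvalue (R : realType) n (A : 'M[R]_n) : Prop :=
  exists a : R, (('X - a%:P) ^+ 2 %| char_poly A)%R.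

From mathcomp Require Import all_boot all_order all_algebra.
From mathcomp Require Import reals.
From mathcomp Require Import ring lra.
Set Implicit Arguments. Unset Strict Implicit. Unset Printing Implicit Defensive.
Import Order.TTheory GRing.Theory Num.Theory.
Local Open Scope ring_scope.

(* A real symmetric 3x3 matrix M with a double eigenvalue a has M - a of rank
   at most one: the characteristic polynomial of N = M - a has e2 = e3 = 0, and
   e2^2 - 2 e1 e3 is a weighted sum of the squares of the 2x2 minors of N.  A
   Householder reflection then makes M orthogonally similar to a + g E00.
   Put B1 in this form.  If g = 0, B1 is scalar and an orthogonal
   diagonalization of B1 + B2 works.  Otherwise, for t <> 0, the matrix
   (g / t) E00 + B2 - mu has rank at most one for some mu; its (1,2)-minor
   makes mu a root of a fixed quadratic, so two distinct values of g / t share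
   the same mu, and comparing their (0,i)-minors forces B2 to be diagonal. *)

(* Vanishing of all 2x2 minors; over a field this is [\rank N <= 1]. *)
Definition rank_le1 {R : comNzRingType} {m n} (N : 'M[R]_(m, n)) : Prop :=
  forall i j k l, N i k * N j l = N i l * N j k.

Lemma rank_le1Z (R : comNzRingType) m n (c : R) (N : 'M[R]_(m, n)) :
  rank_le1 N -> rank_le1 (c *: N).
Proof. by move=> rkN i j k l; rewrite !mxE mulrACA rkN mulrACA. Qed.

Lemma quadratic_three_roots (R : idomainType) (b c x1 x2 x3 : R) :
  x1 ^+ 2 + b * x1 + c = 0 -> x2 ^+ 2 + b * x2 + c = 0 -> x3 ^+ 2 + b * x3 + c = 0 ->
  [\/ x1 = x2, x1 = x3 | x2 = x3].
Proof.
have root_sum x y : x ^+ 2 + b * x + c = 0 -> y ^+ 2 + b * y + c = 0 ->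
    x != y -> x + y + b = 0.
  move=> px py xy; have : (x - y) * (x + y + b) = 0.
    by rewrite -[RHS](subrr 0) -{1}px -py; ring.
  by move/eqP; rewrite mulf_eq0 subr_eq0 (negPf xy) => /eqP.
move=> p1 p2 p3; have [|n12] := eqVneq x1 x2; first by constructor 1.
have [|n13] := eqVneq x1 x3; first by constructor 2.
constructor 3; apply/eqP; rewrite -subr_eq0; apply/eqP.
transitivity ((x1 + x2 + b) - (x1 + x3 + b)); first by ring.
by rewrite (root_sum _ _ p1 p2 n12) (root_sum _ _ p1 p3 n13) subrr.
Qed.

Section DeltaPencil.
Variables (R : idomainType) (n : nat) (B : 'M[R]_n.+1).
Hypothesis symB : B^T = B.

Let pencil g l : 'M[R]_n.+1 := g *: delta_mx 0 0 + B - l%:M.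

Let pencilE g l i j :
  pencil g l i j = g * ((i == 0) && (j == 0))%:R + B i j - l *+ (i == j).
Proof. by rewrite /pencil !mxE. Qed.

Lemma rank_le1_delta_pencil2_diag g1 g2 l : g1 != g2 ->
  rank_le1 (pencil g1 l) -> rank_le1 (pencil g2 l) -> is_diag_mx B.
Proof.
move=> g12 rk1 rk2.
have BT i j : B j i = B i j by rewrite -[in LHS]symB mxE.
have minor0 g i : rank_le1 (pencil g l) -> i != 0 ->
    (g + B 0 0 - l) * (B i i - l) = B i 0 ^+ 2.
  move=> rk i0; have := rk 0 i 0 i.
  rewrite !pencilE !eqxx [0 == _]eq_sym (negPf i0) /= BT => e.
  by apply: etrans (etrans _ e) _; ring.
have Bii i : i != 0 -> B i i = l.
  move=> i0; have : (g1 - g2) * (B i i - l) = 0.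
    transitivity ((g1 + B 0 0 - l) * (B i i - l) - (g2 + B 0 0 - l) * (B i i - l)).
      by ring.
    by rewrite !minor0 // subrr.
  by move/eqP; rewrite mulf_eq0 subr_eq0 (negPf g12) subr_eq0 => /eqP.
have Bi0 i : i != 0 -> B i 0 = 0.
  by move=> i0; apply/eqP; rewrite -sqrf_eq0 -(minor0 g1) // (Bii i) // subrr mulr0.
apply/is_diag_mxP => i j.
have [-> ij | i0] := eqVneq i 0; first by rewrite -BT Bi0 // eq_sym.
have [-> | j0 ij] := eqVneq j 0; first by rewrite Bi0.
have /negPf ij' : i != j by [].
have := rk1 i j i j; rewrite !pencilE !eqxx (negPf i0) (negPf j0) ij' eq_sym ij' /=.
rewrite (Bii i) // (Bii j) // !mulr0 !add0r !mulr0n !subr0 subrr mul0r => e.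
by apply/eqP; rewrite -sqrf_eq0 expr2 -{2}BT -e.
Qed.
End DeltaPencil.

Lemma rank_le1_delta_pencil3_diag (R : idomainType) (B : 'M[R]_3) (g : 'I_3 -> R) :
  B^T = B -> injective g ->
  (forall k, exists l, rank_le1 (g k *: delta_mx 0 0 + B - l%:M)) -> is_diag_mx B.
Proof.
move=> symB g_inj rk.
pose b := - (B 1 1 + B 2 2); pose c := B 1 1 * B 2 2 - B 1 2 * B 2 1.
have root k : exists2 l, l ^+ 2 + b * l + c = 0 &
    rank_le1 (g k *: delta_mx 0 0 + B - l%:M).
  have [l rkl] := rk k; exists l => //; have := rkl 1 2 1 2.
  rewrite !mxE /= !mulr0 !add0r !mulr1n !mulr0n !subr0 => e.
  transitivity ((B 1 1 - l) * (B 2 2 - l) - B 1 2 * B 2 1); first by rewrite /b /c; ring.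
  by rewrite e subrr.
have [l0 r0 rk0] := root 0; have [l1 r1 rk1] := root 1; have [l2 r2 rk2] := root 2.
have gP i j : i != j -> g i != g j by rewrite (inj_eq g_inj).
have [e|e|e] := quadratic_three_roots r0 r1 r2.
- by apply: (rank_le1_delta_pencil2_diag symB (gP 0 1 isT) rk0); rewrite e.
- by apply: (rank_le1_delta_pencil2_diag symB (gP 0 2 isT) rk0); rewrite e.
- by apply: (rank_le1_delta_pencil2_diag symB (gP 1 2 isT) rk1); rewrite e.
Qed.

Lemma det_mx33 (R : comNzRingType) (A : 'M[R]_3) : \det A =
  A 0 0 * A 1 1 * A 2 2 - A 0 0 * A 1 2 * A 2 1
 - A 0 1 * A 1 0 * A 2 2 + A 0 1 * A 1 2 * A 2 0
 + A 0 2 * A 1 0 * A 2 1 - A 0 2 * A 1 1 * A 2 0.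
Proof.
pose a i j := A (inord i) (inord j).
have aE (i j : 'I_3) : A i j = a i j by rewrite /a !inord_val.
rewrite (expand_det_row _ 0) !big_ord_recl big_ord0 /cofactor.
rewrite !(expand_det_row _ 0) !big_ord_recl !big_ord0 /cofactor !det_mx11 !mxE !aE /=.
ring.
Qed.

Lemma horner_char_poly (R : comNzRingType) n (M : 'M[R]_n) x :
  (char_poly M).[x] = \det (x%:M - M).
Proof.
rewrite /char_poly -[_.[x]]/(horner_eval x _) -det_map_mx; congr (\det _).
apply/matrixP => i j; rewrite !mxE -[LHS]/((_ : {poly _}).[x]).
by rewrite hornerD hornerN hornerMn hornerX hornerC.
Qed.

Lemma ord3P (i : 'I_3) : [\/ i = 0, i = 1 | i = 2].
Proof.
case: i => [[|[|[|//]]] ?]; [apply: Or31 | apply: Or32 | apply: Or33]; exact: val_inj.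
Qed.

Lemma sym_mx33_minors_rank_le1 (R : realFieldType) (N : 'M[R]_3) :
  N^T = N ->
  N 0 0 * N 1 1 = N 0 1 ^+ 2 -> N 0 0 * N 2 2 = N 0 2 ^+ 2 -> N 1 1 * N 2 2 = N 1 2 ^+ 2 ->
  N 0 0 * N 1 2 = N 0 2 * N 0 1 -> N 0 1 * N 1 2 = N 0 2 * N 1 1 ->
  N 0 1 * N 2 2 = N 0 2 * N 1 2 -> rank_le1 N.
Proof.
move=> symN z1 z2 z3 z4 z5 z6 i j k l.
have NT i' j' : N j' i' = N i' j' by rewrite -[in LHS]symN mxE.
by case: (ord3P i) => ->; case: (ord3P j) => ->; case: (ord3P k) => ->;
  case: (ord3P l) => ->; rewrite ?(NT 0 1) ?(NT 0 2) ?(NT 1 2); lra.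
Qed.

Lemma sym_mx33_double_root0_rank_le1 (R : realFieldType) (N : 'M[R]_3) (c0 c1 : R) :
  N^T = N -> (forall y, \det (y%:M - N) = (c0 + c1 * y) * y ^+ 2) -> rank_le1 N.
Proof.
move=> symN detN; have NT i j : N j i = N i j by rewrite -[in LHS]symN mxE.
pose e1 := N 0 0 + N 1 1 + N 2 2.
pose e2 := N 0 0 * N 1 1 + N 0 0 * N 2 2 + N 1 1 * N 2 2
  - N 0 1 ^+ 2 - N 0 2 ^+ 2 - N 1 2 ^+ 2.
pose e3 := N 0 0 * N 1 1 * N 2 2 + 2 * N 0 1 * N 1 2 * N 0 2
  - N 0 0 * N 1 2 ^+ 2 - N 1 1 * N 0 2 ^+ 2 - N 2 2 * N 0 1 ^+ 2.
have charN y : (c0 + c1 * y) * y ^+ 2 = y ^+ 3 - e1 * y ^+ 2 + e2 * y - e3.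
  by rewrite -detN det_mx33 !mxE /= (NT 0 1) (NT 0 2) (NT 1 2) /e1 /e2 /e3; ring.
have e3_0 : e3 = 0 by have := charN 0; lra.
have e2_0 : e2 = 0 by have := charN 1; have := charN (-1); have := charN 2; lra.
set m1 := N 0 0 * N 1 1 - N 0 1 ^+ 2; set m2 := N 0 0 * N 2 2 - N 0 2 ^+ 2.
set m3 := N 1 1 * N 2 2 - N 1 2 ^+ 2; set m4 := N 0 0 * N 1 2 - N 0 2 * N 0 1.
set m5 := N 0 1 * N 1 2 - N 0 2 * N 1 1; set m6 := N 0 1 * N 2 2 - N 0 2 * N 1 2.
have sos : m1 ^+ 2 + m2 ^+ 2 + m3 ^+ 2 + 2 * (m4 ^+ 2 + m5 ^+ 2 + m6 ^+ 2) = 0.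
  transitivity (e2 ^+ 2 - 2 * e1 * e3); last by rewrite e2_0 e3_0; ring.
  by rewrite /m1 /m2 /m3 /m4 /m5 /m6 /e1 /e2 /e3; ring.
have sqr0 (x : R) : x ^+ 2 = 0 -> x = 0 by move/eqP; rewrite sqrf_eq0 => /eqP.
have := sqr_ge0 m1; have := sqr_ge0 m2; have := sqr_ge0 m3.
have := sqr_ge0 m4; have := sqr_ge0 m5; have := sqr_ge0 m6 => q6 q5 q4 q3 q2 q1.
have [/sqr0 z1 /sqr0 z2 /sqr0 z3] : [/\ m1 ^+ 2 = 0, m2 ^+ 2 = 0 & m3 ^+ 2 = 0].
  by split; lra.
have [/sqr0 z4 /sqr0 z5 /sqr0 z6] : [/\ m4 ^+ 2 = 0, m5 ^+ 2 = 0 & m6 ^+ 2 = 0].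
  by split; lra.
by apply: sym_mx33_minors_rank_le1 => //; apply/eqP; rewrite -subr_eq0; apply/eqP.
Qed.

Lemma sym_mx33_double_root_rank_le1 (R : realFieldType) (M : 'M[R]_3) (a : R) :
  M^T = M -> ('X - a%:P) ^+ 2 %| char_poly M -> rank_le1 (M - a%:M).
Proof.
move=> symM /dvdpP [q charM].
have size_q : size q = 2.
  have q0 : q != 0.
    by apply: contra_eq_neq charM => ->; rewrite mul0r -size_poly_eq0 size_char_poly.
  have := size_char_poly M; rewrite charM size_mul ?expf_neq0 ?polyXsubC_eq0 //.
  by rewrite size_exp_XsubC addn3 => -[].
apply: (@sym_mx33_double_root0_rank_le1 _ _ (q`_0 + q`_1 * a) q`_1).
  by rewrite linearB /= tr_scalar_mx symM.
move=> y; rewrite opprB addrA -raddfD -horner_char_poly charM hornerM horner_exp.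
rewrite hornerXsubC horner_coef size_q !big_ord_recl big_ord0 /=.
by rewrite expr0 expr1 mulr1 addr0 addrK; ring.
Qed.

Section Householder.
Variable R : fieldType.

Definition householder_mx n (w : 'cV[R]_n) : 'M[R]_n :=
  1%:M - (2 / (w^T *m w) 0 0) *: (w *m w^T).

Lemma trmx_householder n (w : 'cV[R]_n) : (householder_mx w)^T = householder_mx w.
Proof. by rewrite /householder_mx linearB linearZ /= trmx1 trmx_mul trmxK. Qed.

Lemma householder_mxK n (w : 'cV[R]_n) : householder_mx w *m householder_mx w = 1%:M.
Proof.
rewrite /householder_mx; set s := (w^T *m w) 0 0; set W := w *m w^T.
have WW : W *m W = s *: W.
  by rewrite /W mulmxA -(mulmxA w) [w^T *m w]mx11_scalar mul_mx_scalar -scalemxAl.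
(* where [s = 0] the coefficient [2 / s] is itself [0] *)
have coef : 2 / s * (2 / s) * s = 2 / s + 2 / s.
  by have [->|s0] := eqVneq s 0; [rewrite invr0 !mulr0 addr0 | field].
rewrite mulmxBl mulmxBr !mul1mx mulmxBr mulmx1 -scalemxAl -scalemxAr WW !scalerA coef.
by rewrite scalerDl opprB addrK subrK.
Qed.
End Householder.

Lemma dot_self_eq0 (R : realDomainType) n (w : 'cV[R]_n) :
  ((w^T *m w) 0 0 == 0) = (w == 0).
Proof.
have -> : (w^T *m w) 0 0 = \sum_i w i 0 ^+ 2.
  by rewrite mxE; apply: eq_bigr => i _; rewrite mxE expr2.
rewrite psumr_eq0 => [|i _]; last exact: sqr_ge0.
apply/idP/eqP => [/allP w0 | ->].
  apply/matrixP => i j; rewrite (ord1 j) mxE; apply/eqP.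
  by rewrite -sqrf_eq0; apply: (implyP (w0 i _)); rewrite ?mem_index_enum.
by apply/allP => i _; rewrite !mxE expr2 mulr0 eqxx.
Qed.

Lemma householder_mx_align (R : rcfType) n (v : 'cV[R]_n.+1)
    (r := Num.sqrt ((v^T *m v) 0 0)) :
  householder_mx (v - r *: delta_mx 0 0) *m v = r *: delta_mx 0 0.
Proof.
set e : 'cV[R]_n.+1 := delta_mx 0 0; set w := v - r *: e; set s0 := (v^T *m v) 0 0.
have vTv : v^T *m v = s0%:M by exact: mx11_scalar.
have eTv : e^T *m v = (v 0 0)%:M by rewrite [LHS]mx11_scalar trmx_delta -rowE mxE.
have vTe : v^T *m e = (v 0 0)%:M by rewrite -[LHS]trmxK trmx_mul trmxK eTv tr_scalar_mx.
have eTe : e^T *m e = 1%:M by rewrite trmx_delta mul_delta_mx [LHS]mx11_scalar mxE.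
have r2 : r ^+ 2 = s0.
  rewrite sqr_sqrtr // mxE sumr_ge0 // => i _; rewrite mxE -expr2; exact: sqr_ge0.
set d := s0 - r * v 0 0.
have wT : w^T = v^T - r *: e^T by rewrite linearB linearZ.
have wTv : w^T *m v = d%:M.
  by rewrite wT mulmxBl -scalemxAl vTv eTv scale_scalar_mx -raddfB.
have wTw : (w^T *m w) 0 0 = 2 * d.
  rewrite wT mulmxBl /w !mulmxBr -!scalemxAr -!scalemxAl vTv vTe eTv eTe.
  by rewrite !mxE /= /d -r2; ring.
rewrite /householder_mx wTw mulmxBl mul1mx -scalemxAl -mulmxA wTv mul_mx_scalar scalerA.
have [d0 | d0] := eqVneq d 0.
  have /eqP : w = 0 by apply/eqP; rewrite -dot_self_eq0 wTw d0 mulr0.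
  by rewrite subr_eq0 d0 mulr0 scale0r subr0 => /eqP.
have -> : 2 / (2 * d) * d = 1 by field.
by rewrite scale1r opprB addrC subrK.
Qed.

Lemma orthogonal_align_delta (R : rcfType) n (v : 'cV[R]_n.+1) :
  exists Q : 'M[R]_n.+1, exists c : R, Q *m Q^T = 1%:M /\ Q^T *m v = c *: delta_mx 0 0.
Proof.
pose r := Num.sqrt ((v^T *m v) 0 0).
exists (householder_mx (v - r *: delta_mx 0 0)), r.
by rewrite trmx_householder householder_mxK householder_mx_align.
Qed.

Lemma sym_rank_le1_similar_delta (R : rcfType) n (N : 'M[R]_n.+1) :
  N^T = N -> rank_le1 N ->
  exists Q : 'M[R]_n.+1, exists g : R,
    Q *m Q^T = 1%:M /\ Q^T *m N *m Q = g *: delta_mx 0 0.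
Proof.
move=> symN rkN; have NT i j : N j i = N i j by rewrite -[in LHS]symN mxE.
have [/existsP [k Nkk] | /existsPn N0] := boolP [exists k, N k k != 0]; last first.
  have -> : N = 0.
    apply/matrixP => i j; apply/eqP; rewrite mxE -sqrf_eq0 expr2 -{2}NT -rkN.
    by rewrite (eqP (negPn (N0 i))) mul0r.
  by exists 1%:M, 0; rewrite trmx1 mulmx1 mulmx0 mul0mx scale0r.
set v := col k N.
have Nv : N = (N k k)^-1 *: (v *m v^T).
  by apply/matrixP => i j; rewrite !mxE big_ord1 !mxE -[N j k]NT -rkN; field.
have [Q [c [QQ Qv]]] := orthogonal_align_delta v.
exists Q, (c ^+ 2 / N k k); split => //.
rewrite [in LHS]Nv -scalemxAr -scalemxAl.
have -> : Q^T *m (v *m v^T) *m Q = (Q^T *m v) *m (Q^T *m v)^T.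
  by rewrite trmx_mul trmxK !mulmxA.
rewrite Qv linearZ /= trmx_delta -scalemxAr -scalemxAl mul_delta_mx !scalerA.
by rewrite mulrC expr2.
Qed.

Lemma scalar_mx_conj (R : comNzRingType) n (P Q : 'M[R]_n) (a : R) :
  P *m Q = 1%:M -> P *m a%:M *m Q = a%:M.
Proof. by move=> PQ; rewrite mul_mx_scalar -scalemxAl PQ scalemx1. Qed.

Lemma char_poly_orthogonal_conj (R : comNzRingType) n (Q M : 'M[R]_n) :
  Q *m Q^T = 1%:M -> char_poly (Q^T *m M *m Q) = char_poly M.
Proof.
move=> /mulmx1C QTQ; rewrite /char_poly /char_poly_mx.
have eX : ('X%:M : 'M_n) = map_mx polyC Q^T *m 'X%:M *m map_mx polyC Q.
  by rewrite mul_mx_scalar -scalemxAl -map_mxM QTQ map_mx1 scalemx1.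
rewrite !map_mxM {1}eX -mulmxBl -mulmxBr !det_mulmx mulrAC -det_mulmx -map_mxM QTQ.
by rewrite map_mx1 det1 mul1r.
Qed.

Lemma sym_mx33_double_root_similar (R : rcfType) (M : 'M[R]_3) (a : R) :
  M^T = M -> ('X - a%:P) ^+ 2 %| char_poly M ->
  exists Q : 'M[R]_3, exists g : R,
    Q *m Q^T = 1%:M /\ Q^T *m M *m Q = a%:M + g *: delta_mx 0 0.
Proof.
move=> symM dvdM; have symMa : (M - a%:M)^T = M - a%:M.
  by rewrite linearB /= tr_scalar_mx symM.
have [Q [g [QQ QMQ]]] :=
  sym_rank_le1_similar_delta symMa (sym_mx33_double_root_rank_le1 symM dvdM).
exists Q, g; split => //.
by rewrite -QMQ mulmxBr mulmxBl scalar_mx_conj ?(mulmx1C QQ) // addrC subrK.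
Qed.

Lemma is_diag_scalar_add_delta (R : pzSemiRingType) n (a g : R) :
  is_diag_mx (a%:M + g *: delta_mx 0 0 : 'M[R]_n.+1).
Proof.
apply/is_diag_mxP => i j ij; have /negPf ij' : i != j by [].
rewrite !mxE ij' mulr0n add0r.
by have [i0|_] := eqVneq i 0; rewrite /= ?mulr0 // -i0 eq_sym ij' mulr0.
Qed.

Lemma rank_le1_delta_pencil_rescale (R : fieldType) n (B : 'M[R]_n.+1) (a g t l : R) :
  t != 0 -> rank_le1 (a%:M + g *: delta_mx 0 0 + t *: B - l%:M) ->
  rank_le1 ((g / t) *: delta_mx 0 0 + B - ((l - a) / t)%:M).
Proof.
move=> t0 /(rank_le1Z t^-1); congr rank_le1; apply/matrixP => i j; rewrite !mxE.
by case: (i == j); case: (_ && _); rewrite /= ?mulr1n ?mulr0n; field.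
Qed.

Section SymmetricPencil.
Variables (R : realType) (B1 B2 : 'M[R]_3).
Hypotheses (symB1 : symmetric_mx B1) (symB2 : symmetric_mx B2).
Hypothesis pencil_double : forall t : R, has_multiple_eigenvalue (B1 + t *: B2).

Lemma pencil_conj_rank_le1 (Q : 'M[R]_3) (a g t : R) :
  orthogonal_mx Q -> Q^T *m B1 *m Q = a%:M + g *: delta_mx 0 0 ->
  exists l, rank_le1 (a%:M + g *: delta_mx 0 0 + t *: (Q^T *m B2 *m Q) - l%:M).
Proof.
move=> QQ B1Q; have [l dvdl] := pencil_double t; exists l.
have -> : a%:M + g *: delta_mx 0 0 + t *: (Q^T *m B2 *m Q) =
    Q^T *m (B1 + t *: B2) *m Q.
  by rewrite mulmxDr mulmxDl B1Q -scalemxAr -scalemxAl.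
apply: sym_mx33_double_root_rank_le1; last by rewrite char_poly_orthogonal_conj.
by rewrite !trmx_mul trmxK linearD linearZ /= symB1 symB2 mulmxA.
Qed.

Lemma scalar_pencil_codiag (a : R) : B1 = a%:M ->
  exists Q : 'M[R]_3, orthogonal_mx Q /\
    is_diag_mx (Q^T *m B1 *m Q) /\ is_diag_mx (Q^T *m B2 *m Q).
Proof.
move=> B1a; have [b dvdb] := pencil_double 1; rewrite scale1r B1a in dvdb.
have symaB2 : (a%:M + B2)^T = a%:M + B2 by rewrite linearD /= tr_scalar_mx symB2.
have [Q [h [QQ QBQ]]] := sym_mx33_double_root_similar symaB2 dvdb.
have QTQ := mulmx1C QQ; exists Q; split => //.
rewrite B1a scalar_mx_conj // scalar_mx_is_diag; split => //.
have -> : Q^T *m B2 *m Q = (b - a)%:M + h *: delta_mx 0 0.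
  by rewrite raddfB /= addrAC -QBQ mulmxDr mulmxDl scalar_mx_conj // addrC addKr.
exact: is_diag_scalar_add_delta.
Qed.

Lemma delta_pencil_diag (Q : 'M[R]_3) (a g : R) : g != 0 ->
  orthogonal_mx Q -> Q^T *m B1 *m Q = a%:M + g *: delta_mx 0 0 ->
  is_diag_mx (Q^T *m B2 *m Q).
Proof.
move=> g0 QQ B1Q.
apply: (@rank_le1_delta_pencil3_diag _ _ (fun k => g / (k.+1)%:R)) => [|i j|k].
- by rewrite !trmx_mul trmxK symB2 mulmxA.
- by move/(mulfI g0)/invr_inj/eqP; rewrite eqr_nat eqSS => /eqP/val_inj.
have [l rkl] := pencil_conj_rank_le1 (k.+1)%:R QQ B1Q.
exists ((l - a) / (k.+1)%:R).
by apply: rank_le1_delta_pencil_rescale rkl; rewrite pnatr_eq0.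
Qed.
End SymmetricPencil.

Theorem lemma4p1 (R : realType) (B1 B2 : 'M[R]_3) :
  symmetric_mx B1 -> symmetric_mx B2 ->
  (forall t : R, has_multiple_eigenvalue (B1 + t *: B2)) ->
  exists Q : 'M[R]_3, orthogonal_mx Q /\
    is_diag_mx (Q^T *m B1 *m Q) /\ is_diag_mx (Q^T *m B2 *m Q).
Proof.
move=> symB1 symB2 pencil_double.
have [a dvdB1] : has_multiple_eigenvalue B1.
  by have := pencil_double 0; rewrite scale0r addr0.
have [Q [g [QQ B1Q]]] := sym_mx33_double_root_similar symB1 dvdB1.
have [g0 | g0] := eqVneq g 0.
  apply: (scalar_pencil_codiag symB2 pencil_double (a := a)).
  have -> : B1 = Q *m (Q^T *m B1 *m Q) *m Q^T.
    by rewrite !mulmxA QQ mul1mx -mulmxA QQ mulmx1.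
  by rewrite B1Q g0 scale0r addr0 scalar_mx_conj.
exists Q; split => //; rewrite B1Q is_diag_scalar_add_delta; split => //.
exact: (delta_pencil_diag symB1 symB2 pencil_double g0 QQ B1Q).
Qed.
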